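(* Let $g\ge0$, $n\ge1$. Let $Ch_1,Ch_2\in\mathbf{K}$ be two chambers and $\mathcal{A}\in Ch_1$, $\mathcal{B}\in Ch_2$ weight data. If $Ch_1\le Ch_2$, then the category $\mathcal{G}_{g,\mathcal{A}}$ is a full subcategory of $\mathcal{G}_{g,\mathcal{B}}$.
   Context: A weight datum is $\mathcal{A}=(a_1,\dots,a_n)$ with $a_i\in\mathbb{Q}\cap(0,1]$ and $2g-2+\sum_i a_i>0$; $\mathcal{D}_{g,n}\subset\mathbb{R}^n$ is the set of weight data. For $S\subseteq\{1,\dots,n\}$ with $2\le|S|\le n$ if $g\ge1$ (resp. $2\le|S|\le n-2$ if $g=0$), the wall $w_S$ is the locus $\sum_{i\in S}a_i=1$. The chambers are the connected components of the complement in $\mathcal{D}_{g,n}$ of all walls; each is determined by the direction ($<1$ or $>1$) of $\sum_{i\in S}a_i$ for each such $S$. $\mathbf{K}$ is the set of chambers, partially ordered by $Ch_1\le Ch_2$ iff for every such $S$, $\sum_{i\in S}a_i>1$ on $Ch_1$ implies $\sum_{i\in S}b_i>1$ on $Ch_2$. A $(g,\mathcal{A})$-stable graph is a finite connected graph $G$ (loops and multiple edges allowed) with vertex weight $w:V(G)\to\mathbb{Z}_{\ge0}$ and $n$ legs labelled $1,\dots,n$ attached via $m:\{1,\dots,n\}\to V(G)$, with $b_1(G)+\sum_v w(v)=g$ and $2w(v)-2+|v|_E+|v|_{\mathcal{A}}>0$ for every vertex $v$, where $|v|_E$ is the number of edge half-edges at $v$ (loops counted twice) and $|v|_{\mathcal{A}}=\sum_{m(i)=v}a_i$.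 $\mathcal{G}_{g,\mathcal{A}}$ is the category whose objects are $(g,\mathcal{A})$-stable graphs and whose morphisms are compositions of isomorphisms of weighted marked graphs and weighted edge contractions. *)

From HB Require Import structures.
From mathcomp Require Import all_boot all_order all_algebra.
Set Implicit Arguments. Unset Strict Implicit. Unset Printing Implicit Defensive.
Import Order.TTheory GRing.Theory Num.Theory.

Definition weight_datum (g n : nat) (A : 'I_n -> rat) : Prop :=
  (forall i, (0 < A i)%R /\ (A i <= 1)%R) /\
  (0 < (2 * g%:R - 2 + \sum_(i < n) A i))%R.

Definition wall_index (g n : nat) (S : {set 'I_n}) : bool :=
  if g is 0 then (2 <= #|S| <= n - 2)%N else (2 <= #|S| <= n)%N.

Definition wsum (n : nat) (A : 'I_n -> rat) (S : {set 'I_n}) : rat :=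
  (\sum_(i in S) A i)%R.

(* A lies in some chamber: A lies on no wall *)
Definition in_chamber (g n : nat) (A : 'I_n -> rat) : Prop :=
  forall S, wall_index g S -> wsum A S <> 1%R.

(* Order on chambers, evaluated at representatives A in Ch_1, B in Ch_2
   (a chamber is determined by the direction of sum_S a_i for each wall S) *)
Definition chamber_le (g n : nat) (A B : 'I_n -> rat) : Prop :=
  forall S, wall_index g S -> (1 < wsum A S)%R -> (1 < wsum B S)%R.

(* vertices 'I_nv, edges 'I_ne with (unordered) endpoints, loops and multiple
   edges allowed, vertex weights, n legs *)
Record wmgraph (n : nat) := WMGraph {
  nv : nat;
  ne : nat;
  ends : 'I_ne -> 'I_nv * 'I_nv;
  wt : 'I_nv -> nat;
  leg : 'I_n -> 'I_nv }.

Definition same_ends (k : nat) (p q : 'I_k * 'I_k) : bool :=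
  (p == q) || (p == (q.2, q.1)).

Definition adj (n : nat) (G : wmgraph n) : rel 'I_(nv G) :=
  fun x y => [exists j, same_ends (ends j) (x, y)].

Definition connected_graph (n : nat) (G : wmgraph n) : Prop :=
  (0 < nv G)%N /\ forall x y, connect (@adj n G) x y.

Definition betti1 (n : nat) (G : wmgraph n) : nat := (ne G + 1 - nv G)%N.

Definition valE (n : nat) (G : wmgraph n) (v : 'I_(nv G)) : nat :=
  (\sum_(j : 'I_(ne G)) (((ends j).1 == v) + ((ends j).2 == v)))%N.

Definition valA (n : nat) (A : 'I_n -> rat) (G : wmgraph n) (v : 'I_(nv G)) : rat :=
  (\sum_(i | leg G i == v) A i)%R.

Definition stable (g n : nat) (A : 'I_n -> rat) (G : wmgraph n) : Prop :=
  connected_graph G /\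
  (betti1 G + (\sum_(v : 'I_(nv G)) wt v) = g)%N /\
  forall v : 'I_(nv G),
    (0 < 2 * (wt v)%:R - 2 + (valE v)%:R + valA A v)%R.

(* a map G -> H: vertex map, and (contravariant) identification of the edges of H
   with edges of G *)
Record gmap (n : nat) (G H : wmgraph n) := GMap {
  vmap : 'I_(nv G) -> 'I_(nv H);
  emap : 'I_(ne H) -> 'I_(ne G) }.

Definition gcomp (n : nat) (G H K : wmgraph n) (f : gmap G H) (h : gmap H K)
  : gmap G K := GMap (vmap h \o vmap f) (emap f \o emap h).

Definition edge_compat (n : nat) (G H : wmgraph n) (f : gmap G H) : Prop :=
  forall j : 'I_(ne H),
    same_ends (vmap f (ends (emap f j)).1, vmap f (ends (emap f j)).2) (ends j).

Definition is_iso (n : nat) (G H : wmgraph n) (f : gmap G H) : Prop :=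
  bijective (vmap f) /\ bijective (emap f) /\ edge_compat f /\
  (forall v, wt (vmap f v) = wt v) /\
  (forall i, leg H i = vmap f (leg G i)).

Definition is_contraction (n : nat) (G H : wmgraph n) (f : gmap G H)
  (e : 'I_(ne G)) : Prop :=
  injective (emap f) /\ (forall j, emap f j != e) /\
  (forall e', e' != e -> exists j, emap f j = e') /\
  edge_compat f /\
  (forall x y, vmap f x = vmap f y <-> (x = y \/ same_ends (x, y) (ends e))) /\
  (forall v', exists v, vmap f v = v') /\
  (forall v' : 'I_(nv H),
     wt v' = ((\sum_(v | vmap f v == v') wt v)
              + (((ends e).1 == (ends e).2) && (vmap f (ends e).1 == v')))%N) /\
  (forall i, leg H i = vmap f (leg G i)).

Definition elementary (n : nat) (G H : wmgraph n) (f : gmap G H) : Prop :=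
  is_iso f \/ exists e, is_contraction f e.

Inductive morph (n : nat) (P : wmgraph n -> Prop)
  : forall G H : wmgraph n, gmap G H -> Prop :=
| morph_elem G H (f : gmap G H) : P G -> P H -> elementary f -> morph P f
| morph_comp G H K (f : gmap G H) (h : gmap H K) :
    morph P f -> morph P h -> morph P (gcomp f h).

Definition full_subcategory (n : nat) (P Q : wmgraph n -> Prop) : Prop :=
  (forall G, P G -> Q G) /\
  (forall G H (f : gmap G H), P G -> P H -> (morph P f <-> morph Q f)).

(* Put k(v) = 2 w(v) + |v|_E.  The stability inequality k(v) - 2 + |v|_A > 0
   is automatic for k(v) >= 3 and otherwise asks the legs at v to carry weight
   > 0, > 1 or > 2.  The first condition holds for any positive weights, the
   second is decided by the wall of the leg set (when the leg set is not a wall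
   it is impossible or automatic), and the third forces the one-vertex genus 0
   graph carrying all legs, where it holds for every weight datum.  Hence if
   Ch_1 <= Ch_2, every (g,A)-stable graph is (g,B)-stable.
   Conversely, the excess k(v) - 2 + |v|_A is additive along the fibres of an
   isomorphism or of a weighted edge contraction: the two half-edges of the
   contracted edge are made up for by the extra weight of a contracted loop, or
   by the extra -2 of a merged pair of vertices.  So a chain of (g,B)-stable
   graphs and such maps that starts at a (g,A)-stable graph consists of
   (g,A)-stable graphs. *)

From HB Require Import structures.
From mathcomp Require Import all_boot all_order all_algebra.
From mathcomp Require Import zify ring lra.
Set Implicit Arguments. Unset Strict Implicit. Unset Printing Implicit Defensive.
Import Order.TTheory GRing.Theory Num.Theory.
Local Open Scope ring_scope.

Definition vstab n (A : 'I_n -> rat) (G : wmgraph n) (v : 'I_(nv G)) : rat :=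
  2 * (wt v)%:R - 2 + (valE v)%:R + valA A v.

Definition vertex_stable n (A : 'I_n -> rat) (G : wmgraph n) : Prop :=
  forall v : 'I_(nv G), 0 < vstab A v.

Lemma same_ends_count k (p q : 'I_k * 'I_k) (v : 'I_k) : same_ends p q ->
  ((p.1 == v) + (p.2 == v) = (q.1 == v) + (q.2 == v))%N.
Proof. by case/orP => /eqP -> //=; rewrite addnC. Qed.

Lemma same_endsC k (p q : 'I_k * 'I_k) : same_ends p q = same_ends q p.
Proof.
case: p q => [a b] [c d]; rewrite /same_ends.
by apply/idP/idP => /orP [] /eqP [-> ->]; rewrite eqxx ?orbT.
Qed.

Lemma same_ends_mem k (u w : 'I_k) (p : 'I_k * 'I_k) :
  same_ends (u, w) p -> (u == p.1) || (u == p.2).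
Proof. by case: p => a b; case/orP => /eqP [-> _]; rewrite eqxx ?orbT. Qed.

Lemma sum_eq_indicator (T : finType) (P : pred T) (a : T) :
  (\sum_(v | P v) (a == v) = P a)%N.
Proof.
rewrite big_mkcond (bigD1 a) //= eqxx big1 ?addn0; first by case: (P a).
by move=> i /negPf; rewrite eq_sym => ->; case: (P i).
Qed.

Section Fibres.

Variables (n : nat) (G H : wmgraph n) (f : gmap G H).

Definition fibre (v' : 'I_(nv H)) : {set 'I_(nv G)} := [set v | vmap f v == v'].

Lemma big_fibreE (R : Type) (idx : R) (op : Monoid.com_law idx)
    (F : 'I_(nv G) -> R) v' :
  \big[op/idx]_(v in fibre v') F v = \big[op/idx]_(v | vmap f v == v') F v.
Proof. by apply: eq_bigl => v; rewrite inE. Qed.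

Hypothesis f_leg : forall i, leg H i = vmap f (leg G i).

Lemma valA_fibre (A : 'I_n -> rat) v' :
  valA A v' = \sum_(v in fibre v') valA A v.
Proof.
rewrite big_fibreE {1}/valA (eq_bigl (fun i => vmap f (leg G i) == v')) => [|i];
  last by rewrite f_leg.
rewrite (partition_big (leg G) (fun v => vmap f v == v')) //=.
apply: eq_bigr => v /eqP fv; apply: eq_bigl => i.
by case: (eqVneq (leg G i) v) => [->|]; rewrite ?fv ?eqxx ?andbF.
Qed.

Lemma vstab_fibre (A : 'I_n -> rat) v' :
  ((wt v').*2 + valE v' + #|fibre v'|.*2
     = (\sum_(v in fibre v') wt v).*2 + \sum_(v in fibre v') valE v + 2)%N ->
  vstab A v' = \sum_(v in fibre v') vstab A v.
Proof.
move=> /eqP; rewrite -(eqr_nat rat) -!addnn !natrD => /eqP count.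
rewrite /vstab !big_split /= sumr_const -mulr_sumr -valA_fibre mulNrn.
rewrite -mulr_natr -!natr_sum; lra.
Qed.

Lemma vertex_stable_fibres (A : 'I_n -> rat) :
  (forall v', exists v, vmap f v = v') ->
  (forall v', (wt v').*2 + valE v' + #|fibre v'|.*2
     = (\sum_(v in fibre v') wt v).*2 + \sum_(v in fibre v') valE v + 2)%N ->
  vertex_stable A G -> vertex_stable A H.
Proof.
move=> f_surj count stA v'; rewrite (vstab_fibre A (count v')).
have [v fv] := f_surj v'.
rewrite (bigD1 v) ?inE ?fv //=; apply: ltr_pwDl; first exact: stA.
by apply: sumr_ge0 => u _; apply: ltW.
Qed.

Hypotheses (f_compat : edge_compat f) (emap_inj : injective (emap f)).

Lemma valE_fibre v' :
  (\sum_(v in fibre v') valE v = valE v' +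
    \sum_(j | j \notin [set emap f j' | j' in setT])
       ((vmap f (ends j).1 == v') + (vmap f (ends j).2 == v')))%N.
Proof.
rewrite big_fibreE /valE exchange_big /=.
under eq_bigr => j _ do rewrite big_split /= !sum_eq_indicator.
rewrite (bigID (fun j => j \in [set emap f j' | j' in setT])) /=.
congr (_ + _)%N.
rewrite big_imset /=; last by move=> x y _ _; apply: emap_inj.
apply: eq_big => [j|j _]; first by rewrite in_setT.
by rewrite (same_ends_count _ (f_compat j)).
Qed.

End Fibres.

Lemma iso_vertex_stable n (A : 'I_n -> rat) (G H : wmgraph n) (f : gmap G H) :
  is_iso f -> vertex_stable A G -> vertex_stable A H.
Proof.
move=> [[vi vK Kv] [[ei eK Ke] [compat [f_wt f_leg]]]].
have fibreE v' : fibre f v' = [set vi v'].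
  by apply/setP => v; rewrite !inE -{1}[v']Kv (can_eq vK).
apply: (vertex_stable_fibres f_leg) => v'; first by exists (vi v').
have := valE_fibre compat (can_inj eK) v'.
rewrite [X in (_ + X)%N]big_pred0 => [|j /=]; last first.
  by rewrite -[j]Ke imset_f ?in_setT.
by rewrite fibreE !big_set1 cards1 addn0 => ->; rewrite -{1}[v']Kv f_wt.
Qed.

Section Contraction.

Variables (n : nat) (G H : wmgraph n) (f : gmap G H) (e : 'I_(ne G)).
Hypothesis contr : is_contraction f e.

Let x := (ends e).1.
Let y := (ends e).2.

Lemma contraction_merge u : (vmap f u == vmap f x) = (u == x) || (u == y).
Proof.
case: contr => _ [_ [_ [_ [f_eq _]]]].
apply/eqP/idP => [/f_eq [->|/same_ends_mem //]|]; first by rewrite eqxx.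
case/orP => /eqP -> //; apply/f_eq; right.
by rewrite /same_ends /x /y; case: (ends e) => a b; rewrite eqxx orbT.
Qed.

Lemma contraction_card_fibre v' :
  (#|fibre f v'| + ((x == y) && (vmap f x == v')) = (vmap f x == v') + 1)%N.
Proof.
have fy : vmap f y = vmap f x by apply/eqP; rewrite contraction_merge eqxx orbT.
case: (eqVneq (vmap f x) v') => [<-|fx_v'].
  have -> : fibre f (vmap f x) = [set x; y].
    by apply/setP => u; rewrite !inE contraction_merge.
  by rewrite cards2; case: eqP.
case: contr => _ [_ [_ [_ [f_eq [f_surj _]]]]].
have [v fv] := f_surj v'.
suff -> : fibre f v' = [set v] by rewrite cards1 andbF.
apply/setP => u; rewrite !inE -fv; apply/eqP/eqP => [fuv|->] //.
have [//|/same_ends_mem] := (f_eq u v).1 fuv.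
by rewrite -/x -/y => /orP [] /eqP fu; case/eqP: fx_v'; rewrite -fv -fuv fu ?fy.
Qed.

Lemma contraction_vertex_stable (A : 'I_n -> rat) :
  vertex_stable A G -> vertex_stable A H.
Proof.
have [emap_inj [emap_ne [emap_onto [compat [_ [f_surj [f_wt f_leg]]]]]]] := contr.
apply: (vertex_stable_fibres f_leg) => // v'.
have missing j : (j \notin [set emap f j' | j' in setT]) = (j == e).
  case: (eqVneq j e) => [->|je].
    by apply/imsetP => -[j' _ ej']; move: (emap_ne j'); rewrite -ej' eqxx.
  by have [j' <-] := emap_onto j je; rewrite imset_f ?in_setT.
rewrite (valE_fibre compat emap_inj) (eq_bigl _ _ missing) big_pred1_eq.
rewrite f_wt -big_fibreE.
have fy : vmap f y = vmap f x by apply/eqP; rewrite contraction_merge eqxx orbT.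
have := contraction_card_fibre v'; rewrite -/x -/y fy.
case: (x == y); case: (vmap f x == v') => /=; lia.
Qed.

End Contraction.

Lemma elementary_vertex_stable n (A : 'I_n -> rat) (G H : wmgraph n)
    (f : gmap G H) :
  elementary f -> vertex_stable A G -> vertex_stable A H.
Proof.
by case=> [/iso_vertex_stable | [e /contraction_vertex_stable]]; apply.
Qed.

Lemma wsum_gt0 n (C : 'I_n -> rat) (S : {set 'I_n}) :
  (forall i, 0 < C i) -> S != set0 -> 0 < wsum C S.
Proof.
move=> C_gt0 /set0Pn [x x_in]; rewrite /wsum (bigD1 x) //=.
by apply: ltr_pwDl; [exact: C_gt0 | apply: sumr_ge0 => i _; apply: ltW].
Qed.

Lemma wsum_card_le1 n (C : 'I_n -> rat) (S : {set 'I_n}) :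
  (forall i, C i <= 1) -> (#|S| <= 1)%N -> wsum C S <= 1.
Proof.
move=> C_le1; rewrite leq_eqVlt ltnS leqn0 /wsum.
by case/orP => [/cards1P [x ->]|/eqP/cards0_eq ->]; rewrite ?big_set1 ?big_set0.
Qed.

Lemma wsum_setC n (C : 'I_n -> rat) (S : {set 'I_n}) :
  \sum_(i < n) C i = wsum C S + wsum C (~: S).
Proof.
rewrite /wsum (bigID (mem S)) /=; congr (_ + _).
by apply: eq_bigl => i; rewrite in_setC.
Qed.

(* A leg set that is not a wall either has at most one element, so that its
   weight cannot exceed 1, or (in genus 0) a complement with at most one
   element, so that its weight exceeds 1 for every weight datum. *)
Lemma chamber_le_wsum_gt1 g n (A B : 'I_n -> rat) (S : {set 'I_n}) :
  weight_datum g A -> weight_datum g B -> chamber_le g A B ->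
  1 < wsum A S -> 1 < wsum B S.
Proof.
move=> [A_range _] [B_range B_total] AleB A_gt1.
have [S_le1|S_gt1] := leqP #|S| 1.
  by move: A_gt1; rewrite ltNge wsum_card_le1 // => i; case: (A_range i).
have [wall|] := boolP (wall_index g S); first exact: AleB.
rewrite /wall_index; case: g B_total {AleB} => [|g] B_total; last first.
  by rewrite S_gt1 -[X in (_ <= X)%N]card_ord max_card.
rewrite S_gt1 /= -ltnNge => S_big.
have Sc_le1 : (#|~: S| <= 1)%N.
  move: (cardsC S) S_big; rewrite card_ord.
  by set s := #|S|; set sc := #|~: S|; lia.
have := wsum_card_le1 (fun i => (B_range i).2) Sc_le1.
by move: B_total; rewrite (wsum_setC B S) mulr0n mulr0; lra.
Qed.

Lemma connected_valE0_eq n (G : wmgraph n) (v : 'I_(nv G)) :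
  connected_graph G -> valE v = 0%N -> forall u, u = v.
Proof.
move=> [_ conn] /eqP; rewrite sum_nat_eq0 => /forallP no_end u.
have [[|x p] path_p ->] := connectP (conn v u); first by [].
case/andP: path_p => /existsP [j].
rewrite same_endsC => /same_ends_mem end_j _.
move/implyP: (no_end j) => /(_ isT).
rewrite addn_eq0 !eqb0 => /andP [/negPf end1 /negPf end2].
by move: end_j; rewrite !(eq_sym v) end1 end2.
Qed.

Lemma isolated_vertex_valA g n (B : 'I_n -> rat) (G : wmgraph n)
    (v : 'I_(nv G)) :
  weight_datum g B -> connected_graph G ->
  (betti1 G + \sum_(u : 'I_(nv G)) wt u)%N = g ->
  wt v = 0%N -> valE v = 0%N -> 2 < valA B v.
Proof.
move=> [_ B_total] conn genus wt_v valE_v.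
have only_v := connected_valE0_eq conn valE_v.
have no_edges : ne G = 0%N.
  case: (posnP (ne G)) => // ne_gt0; move: valE_v.
  set j := Ordinal ne_gt0.
  by rewrite /valE (bigD1 j) //= (only_v (ends j).1) eqxx.
have g0 : g = 0%N.
  rewrite -genus /betti1 no_edges big1 => [|u _]; last by rewrite (only_v u).
  by case: conn => nv_gt0 _; lia.
have -> : valA B v = \sum_(i < n) B i.
  by apply: eq_bigl => i; rewrite (only_v (leg G i)) eqxx.
by move: B_total; rewrite g0 mulr0n mulr0; lra.
Qed.

Lemma excess_pos_transfer (k : nat) (a b : rat) :
  0 <= b -> (0 < a -> 0 < b) -> (1 < a -> 1 < b) -> (k = 0%N -> 2 < b) ->
  0 < k%:R - 2 + a -> 0 < k%:R - 2 + b.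
Proof.
move=> b_ge0 pos gt1 gt2.
have [k_ge3 _|] := leqP 3 k.
  have : 3 <= k%:R :> rat by rewrite (ler_nat _ 3).
  lra.
case: k gt2 => [|[|[|//]]] gt2 _ /=.
- by have := gt2 erefl; lra.
- by move=> ?; have := gt1; lra.
- by move=> ?; have := pos; lra.
Qed.

Lemma vertex_stable_chamber_le g n (A B : 'I_n -> rat) (G : wmgraph n) :
  weight_datum g A -> weight_datum g B -> chamber_le g A B ->
  connected_graph G -> (betti1 G + \sum_(u : 'I_(nv G)) wt u)%N = g ->
  vertex_stable A G -> vertex_stable B G.
Proof.
move=> wA wB AleB conn genus stA v.
set S := [set i | leg G i == v].
have valAE C : valA C v = wsum C S by apply: eq_bigl => i; rewrite inE.
have vstabE C : vstab C v = ((wt v).*2 + valE v)%:R - 2 + wsum C S.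
  by rewrite /vstab valAE natrD -addnn natrD; ring.
have B_gt0 i : 0 < B i by case: wB => /(_ i) [].
move: (stA v); rewrite !vstabE; apply: excess_pos_transfer.
- by apply: sumr_ge0 => i _; apply: ltW.
- move=> A_gt0; apply: wsum_gt0 => //.
  by apply: contraTneq A_gt0 => ->; rewrite /wsum big_set0 ltxx.
- exact: chamber_le_wsum_gt1 wA wB AleB.
- move/eqP; rewrite addn_eq0 double_eq0 => /andP [/eqP wt0 /eqP valE0].
  by rewrite -valAE; exact: isolated_vertex_valA wB conn genus wt0 valE0.
Qed.

Lemma stable_chamber_le g n (A B : 'I_n -> rat) (G : wmgraph n) :
  weight_datum g A -> weight_datum g B -> chamber_le g A B ->
  stable g A G -> stable g B G.
Proof.
move=> wA wB AleB [conn [genus stA]]; do 2!split => //.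
exact: vertex_stable_chamber_le wA wB AleB conn genus stA.
Qed.

Lemma morph_sub n (P Q : wmgraph n -> Prop) (G H : wmgraph n) (f : gmap G H) :
  (forall K, P K -> Q K) -> morph P f -> morph Q f.
Proof.
move=> PQ; elim=> {G H f} [G H f PG PH el|G H K f h _ mf _ mh].
  exact: morph_elem (PQ _ PG) (PQ _ PH) el.
exact: morph_comp mf mh.
Qed.

Lemma morph_restrict n (P Q : wmgraph n -> Prop) :
  (forall G H (f : gmap G H), Q G -> Q H -> elementary f -> P G -> P H) ->
  forall G H (f : gmap G H), morph Q f -> P G -> P H /\ morph P f.
Proof.
move=> P_fwd G H f; elim=> {G H f} [G H f QG QH el|G H K f h _ IHf _ IHh] PG.
  by have PH := P_fwd _ _ _ QG QH el PG; split; last exact: morph_elem.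
have [PH mf] := IHf PG; have [PK mh] := IHh PH.
by split; last exact: morph_comp.
Qed.

Theorem mainTheorem4 (g n : nat) (A B : 'I_n -> rat) :
  (1 <= n)%N ->
  weight_datum g A -> weight_datum g B ->
  in_chamber g A -> in_chamber g B ->
  chamber_le g A B ->
  full_subcategory (stable g A) (stable g B).
Proof.
move=> _ wA wB _ _ AleB.
have AB G : stable g A G -> stable g B G by exact: stable_chamber_le.
have A_fwd G H (f : gmap G H) :
    stable g B G -> stable g B H -> elementary f -> stable g A G -> stable g A H.
  move=> _ [conn [genus _]] el [_ [_ stA]]; do 2!split => //.
  exact: elementary_vertex_stable el stA.
split=> // G H f PG _; split; first exact: morph_sub.
by move=> mB; case: (morph_restrict A_fwd mB PG).
Qed.
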